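(* Consider the two optimization problems \[ \text{(P1)}\quad \min_{q\in\mathbb{R}^{n},\,\theta\in\mathbb{R}^{n}} \ \sum_{j=1}^{n} J_j(q_j) \quad\text{s.t.}\quad q-d-CB\tilde\theta=0,\quad \underline F\le B\tilde\theta\le \overline F,\quad\text{where }\tilde\theta:=C^T\theta, \] \[ \text{(P2)}\quad \min_{q\in\mathbb{R}^{n}} \ \sum_{j=1}^{n} J_j(q_j) \quad\text{s.t.}\quad \mathbf 1^T(q-d)=0,\quad H^T(q-d)\le F . \] Then $(q^*,\tilde\theta^* )$ is an optimal solution to (P1) (i.e. $(q^*,\theta^* )$ is optimal for some $\theta^*$ with $C^T\theta^*=\tilde\theta^*$) if and only if $\tilde\theta^*=C^TL^{\dagger}(q^*-d)$ and $q^*$ is an optimal solution to (P2).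
   Context: A power network is a connected directed graph $(\mathcal N,\mathcal E)$ with $\mathcal N=\{1,\dots,n\}$ and edge set $\mathcal E\subset\mathcal N\times\mathcal N$ (if $(j,k)\in\mathcal E$ then $(k,j)\notin\mathcal E$). $C\in\mathbb{R}^{n\times|\mathcal E|}$ is the incidence matrix: $C_{j,e}=1$ if $e=(j,k)\in\mathcal E$, $C_{j,e}=-1$ if $e=(k,j)\in\mathcal E$, and $0$ otherwise. $B=\mathrm{diag}(B_{jk},(j,k)\in\mathcal E)$ is a diagonal matrix with positive diagonal entries. $L:=CBC^T$ and $L^\dagger$ is its Moore–Penrose inverse. $H\in\mathbb{R}^{n\times 2|\mathcal E|}$ is defined by $H^T=\begin{bmatrix} BC^TL^\dagger\\ -BC^TL^\dagger\end{bmatrix}$. Given line limits $\underline F,\overline F\in\mathbb{R}^{|\mathcal E|}$, $F:=\begin{bmatrix}\overline F\\ -\underline F\end{bmatrix}$. $d\in\mathbb{R}^n$ is a given demand vector, and each $J_j:\mathbb{R}\to\mathbb{R}$ is strictly convex and twice differentiable. $\mathbf 1$ is the all-ones vector. *)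

From HB Require Import structures.
From mathcomp Require Import all_boot all_order all_algebra.
From mathcomp Require Import all_classical all_reals all_analysis.
Set Implicit Arguments. Unset Strict Implicit. Unset Printing Implicit Defensive.
Import Order.TTheory GRing.Theory Num.Theory.
Local Open Scope ring_scope.

Section Defs.
Variable R : realType.

Definition simple_oriented (n m : nat) (edge : 'I_m -> 'I_n * 'I_n) : Prop :=
  injective edge /\ forall e f : 'I_m, edge f <> ((edge e).2, (edge e).1).

Definition adj (n m : nat) (edge : 'I_m -> 'I_n * 'I_n) : rel 'I_n :=
  fun a b => [exists e, edge e == (a, b)] || [exists e, edge e == (b, a)].

Definition graph_connected (n m : nat) (edge : 'I_m -> 'I_n * 'I_n) : Prop :=
  forall j k : 'I_n, connect (adj edge) j k.

Definition incidence (n m : nat) (edge : 'I_m -> 'I_n * 'I_n) : 'M[R]_(n, m) :=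
  \matrix_(j, e) (if (edge e).1 == j then 1 else if (edge e).2 == j then -1 else 0).

(* X is the Moore–Penrose inverse of A (Penrose conditions; it is unique) *)
Definition is_MP_inverse (n : nat) (A X : 'M[R]_n) : Prop :=
  [/\ A *m X *m A = A, X *m A *m X = X, (A *m X)^T = A *m X & (X *m A)^T = X *m A].

Definition cvle (k : nat) (u v : 'cV[R]_k) : Prop := forall i, u i 0 <= v i 0.

Definition strictly_convex (f : R -> R) : Prop :=
  forall x y t : R, x != y -> 0 < t -> t < 1 ->
    f (t * x + (1 - t) * y) < t * f x + (1 - t) * f y.

Definition twice_differentiable (f : R -> R) : Prop :=
  forall x : R, derivable f x 1 /\ derivable (derive1 f) x 1.

Definition objective (n : nat) (J : 'I_n -> R -> R) (q : 'cV[R]_n) : R :=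
  \sum_(j < n) J j (q j 0).

Definition P1_feasible (n m : nat) (C : 'M[R]_(n, m)) (B : 'M[R]_m)
  (d : 'cV[R]_n) (Flo Fup : 'cV[R]_m) (q theta : 'cV[R]_n) : Prop :=
  let thetat := C^T *m theta in
  q - d - C *m B *m thetat = 0 /\ cvle Flo (B *m thetat) /\ cvle (B *m thetat) Fup.

Definition P1_optimal (n m : nat) (J : 'I_n -> R -> R) (C : 'M[R]_(n, m)) (B : 'M[R]_m)
  (d : 'cV[R]_n) (Flo Fup : 'cV[R]_m) (q theta : 'cV[R]_n) : Prop :=
  P1_feasible C B d Flo Fup q theta /\
  forall q' theta', P1_feasible C B d Flo Fup q' theta' -> objective J q <= objective J q'.

Definition P2_feasible (n m : nat) (HT : 'M[R]_(m + m, n)) (F : 'cV[R]_(m + m))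
  (d : 'cV[R]_n) (q : 'cV[R]_n) : Prop :=
  (const_mx 1 : 'rV[R]_n) *m (q - d) = 0 /\ cvle (HT *m (q - d)) F.

Definition P2_optimal (n m : nat) (J : 'I_n -> R -> R) (HT : 'M[R]_(m + m, n))
  (F : 'cV[R]_(m + m)) (d : 'cV[R]_n) (q : 'cV[R]_n) : Prop :=
  P2_feasible HT F d q /\
  forall q', P2_feasible HT F d q' -> objective J q <= objective J q'.

End Defs.

From HB Require Import structures.
From mathcomp Require Import all_boot all_order all_algebra.
From mathcomp Require Import all_classical all_reals all_analysis.
From mathcomp Require Import ring.

Set Implicit Arguments.
Unset Strict Implicit.
Unset Printing Implicit Defensive.
Import Order.TTheory GRing.Theory Num.Theory.
Local Open Scope ring_scope.

(* Both problems minimise the same objective, so it suffices to match their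
   feasible sets.  If [(q, theta)] is feasible for (P1) then [q - d = L theta],
   hence [1^T (q - d) = 0] and [C^T L^+ (q - d) = C^T L^+ L theta = C^T theta];
   the line limits then read [H^T (q - d) <= F].  Conversely [theta := L^+ (q - d)]
   is feasible for (P1) because [L L^+] is the orthogonal projection onto the
   range of [L], which is the orthogonal complement of [ker L = ker C^T], the
   constant vectors of the connected graph. *)

Section WeightedGram.
Variables (R : realType) (n m : nat) (A : 'M[R]_(n, m)) (b : 'I_m -> R).
Hypothesis b_gt0 : forall e, 0 < b e.

Local Notation M := (A *m diag_mx (\row_e b e) *m A^T).

Lemma weighted_gram_tr : M^T = M.
Proof. by rewrite !trmx_mul trmxK tr_diag_mx mulmxA. Qed.

Lemma weighted_gram_mulmx_eq0 p (U : 'M[R]_(n, p)) : M *m U = 0 -> A^T *m U = 0.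
Proof.
move=> MU0; set W := A^T *m U.
have WBW0 : W^T *m diag_mx (\row_e b e) *m W = 0.
  have -> : W^T *m diag_mx (\row_e b e) *m W = U^T *m (M *m U).
    by rewrite trmx_mul trmxK !mulmxA.
  by rewrite MU0 mulmx0.
apply/matrixP => e k; rewrite [RHS]mxE.
have sum0 : \sum_i b i * W i k ^+ 2 = 0.
  move/matrixP: WBW0 => /(_ k k); rewrite !mxE => WBW_kk.
  rewrite -[RHS]WBW_kk; apply: eq_bigr => i _; rewrite mul_mx_diag !mxE; ring.
have term_ge0 i : true -> 0 <= b i * W i k ^+ 2.
  by move=> _; rewrite mulr_ge0 ?sqr_ge0 ?ltW.
move/(_ e isT)/eqP: (psumr_eq0P term_ge0 sum0).
by rewrite mulf_eq0 sqrf_eq0 (gt_eqF (b_gt0 e)) => /eqP.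
Qed.

Variable X : 'M[R]_n.
Hypothesis MP_X : is_MP_inverse M X.

Lemma tr_mulmx_MP_weighted_gram : A^T *m X *m M = A^T.
Proof.
case: MP_X => MXM _ _ _.
have : M *m (1%:M - X *m M) = 0 by rewrite mulmxBr mulmx1 (mulmxA M) MXM subrr.
move/weighted_gram_mulmx_eq0; rewrite mulmxBr mulmx1 => /eqP.
by rewrite subr_eq0 => /eqP fixed; rewrite [RHS]fixed (mulmxA A^T).
Qed.

Lemma tr_mulmx_MP_complement : A^T *m (1%:M - M *m X) = 0.
Proof.
case: MP_X => MXM _ MX_sym _.
apply: weighted_gram_mulmx_eq0.
rewrite -[M in M *m _]weighted_gram_tr.
have -> : 1%:M - M *m X = (1%:M - M *m X)^T by rewrite linearB /= trmx1 MX_sym.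
by rewrite -trmx_mul mulmxBl mul1mx MXM subrr trmx0.
Qed.

End WeightedGram.

Lemma mulmx_sym_const_cols (R : realType) n (Q : 'M[R]_n) (v : 'cV[R]_n) :
  Q^T = Q -> (forall i j k, Q i k = Q j k) ->
  (const_mx 1 : 'rV[R]_n) *m v = 0 -> Q *m v = 0.
Proof.
move=> Q_sym Q_cols sum_v0; apply/matrixP => i z; rewrite (ord1 z) !mxE.
have Q_row k : Q i k = Q i i by rewrite -[Q]Q_sym !mxE; apply: Q_cols.
rewrite (eq_bigr (fun k => Q i i * v k 0)) -?mulr_sumr => [|k _]; last by rewrite Q_row.
have -> : \sum_k v k 0 = ((const_mx 1 : 'rV[R]_n) *m v) 0 0.
  by rewrite mxE; apply: eq_bigr => k _; rewrite mxE mul1r.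
by rewrite sum_v0 mxE mulr0.
Qed.

Section Incidence.
Variables (R : realType) (n m : nat) (edge : 'I_m -> 'I_n * 'I_n).
Hypothesis edge_simple : simple_oriented edge.

Local Notation C := (incidence R edge).

Lemma simple_oriented_loopfree e : (edge e).1 != (edge e).2.
Proof.
case: edge_simple => _ no_reverse; apply/eqP => loop; apply: (no_reverse e e).
by case: (edge e) loop => a a' /= ->.
Qed.

Lemma incidence_tr_mulmx (u : 'cV[R]_n) e :
  (C^T *m u) e 0 = u (edge e).1 0 - u (edge e).2 0.
Proof.
have ends_neq := simple_oriented_loopfree e.
rewrite mxE (bigD1 (edge e).1) //= (bigD1 (edge e).2) ?(eq_sym (edge e).2) //=.
rewrite !mxE eqxx (negbTE ends_neq) eqxx big1 ?addr0 ?mul1r ?mulN1r //.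
move=> j /andP[j1 j2]; rewrite !mxE.
by rewrite (eq_sym _ j) (negbTE j1) (eq_sym _ j) (negbTE j2) mul0r.
Qed.

Lemma row_one_mulmx_incidence : (const_mx 1 : 'rV[R]_n) *m C = 0.
Proof.
apply/matrixP => z e; rewrite (ord1 z) [RHS]mxE.
have := incidence_tr_mulmx (const_mx 1) e; rewrite !mxE subrr => sum0.
rewrite -[RHS]sum0.
by apply: eq_bigr => j _; rewrite !mxE mulrC.
Qed.

Hypothesis edge_connected : graph_connected edge.

Lemma incidence_tr_ker_const (u : 'cV[R]_n) :
  C^T *m u = 0 -> forall j k, u j 0 = u k 0.
Proof.
move=> Cu0 j k.
have closed_level : fingraph.closed (adj edge) [pred x | u x 0 == u k 0].
  move=> x y /orP[] /existsP[e /eqP edge_e];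
  move: (incidence_tr_mulmx u e); rewrite Cu0 mxE edge_e /= => /eqP;
  by rewrite eq_sym subr_eq0 !inE => /eqP ->.
by have := closed_connect closed_level (edge_connected j k); rewrite !inE eqxx => /eqP.
Qed.

Variables (b : 'I_m -> R) (Ld : 'M[R]_n).
Hypothesis b_gt0 : forall e, 0 < b e.

Local Notation L := (C *m diag_mx (\row_e b e) *m C^T).

Hypothesis MP_Ld : is_MP_inverse L Ld.

Lemma laplacian_MP_mulmx_sum0 (v : 'cV[R]_n) :
  (const_mx 1 : 'rV[R]_n) *m v = 0 -> L *m Ld *m v = v.
Proof.
move=> sum_v0; set Q := 1%:M - L *m Ld.
have Q_sym : Q^T = Q.
  by case: MP_Ld => _ _ LLd_sym _; rewrite linearB /= trmx1 LLd_sym.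
have Q_cols i j k : Q i k = Q j k.
  have := @incidence_tr_ker_const (col k Q).
  rewrite colE mulmxA tr_mulmx_MP_complement // mul0mx => /(_ erefl i j).
  by rewrite -colE !mxE.
move/eqP: (mulmx_sym_const_cols Q_sym Q_cols sum_v0).
by rewrite mulmxBl mul1mx subr_eq0 => /eqP <-.
Qed.

End Incidence.

Lemma cvle_col_mx (R : realType) k (a b c d : 'cV[R]_k) :
  cvle (col_mx a b) (col_mx c d) <-> cvle a c /\ cvle b d.
Proof.
split=> [le_col | [le_ac le_bd] i].
  by split=> i; [move: (le_col (lshift k i)) | move: (le_col (rshift k i))];
     rewrite ?col_mxEu ?col_mxEd.
by rewrite -(fintype.splitK i); case: (fintype.split i) => j /=; rewrite ?col_mxEu ?col_mxEd.
Qed.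

Lemma cvleNN (R : realType) k (a c : 'cV[R]_k) : cvle (- a) (- c) <-> cvle c a.
Proof. by split=> le_ac i; move: (le_ac i); rewrite !mxE lerN2. Qed.

Section Feasibility.
Variables (R : realType) (n m : nat) (edge : 'I_m -> 'I_n * 'I_n).
Variables (b : 'I_m -> R) (Ld : 'M[R]_n) (Flo Fup : 'cV[R]_m) (d : 'cV[R]_n).
Hypotheses (edge_simple : simple_oriented edge) (b_gt0 : forall e, 0 < b e).

Local Notation C := (incidence R edge).
Local Notation B := (diag_mx (\row_e b e)).
Local Notation HT := (col_mx (B *m C^T *m Ld) (- (B *m C^T *m Ld))).
Local Notation F := (col_mx Fup (- Flo)).

Hypothesis MP_Ld : is_MP_inverse (C *m B *m C^T) Ld.

Lemma P2_feasibleE (q : 'cV[R]_n) :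
  P2_feasible HT F d q <->
  (const_mx 1 : 'rV[R]_n) *m (q - d) = 0 /\
  cvle Flo (B *m (C^T *m Ld *m (q - d))) /\ cvle (B *m (C^T *m Ld *m (q - d))) Fup.
Proof.
rewrite /P2_feasible mul_col_mx mulNmx cvle_col_mx cvleNN !mulmxA.
by split=> [[? [? ?]] | [? [? ?]]].
Qed.

Lemma P1_feasible_P2 (q theta : 'cV[R]_n) :
  P1_feasible C B d Flo Fup q theta ->
  P2_feasible HT F d q /\ C^T *m Ld *m (q - d) = C^T *m theta.
Proof.
move=> [flow [le_lo le_up]].
have flow_eq : q - d = C *m B *m C^T *m theta.
  by apply/eqP; rewrite -subr_eq0 -mulmxA flow.
have angles : C^T *m Ld *m (q - d) = C^T *m theta.
  by rewrite flow_eq mulmxA tr_mulmx_MP_weighted_gram.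
split=> //; apply/P2_feasibleE; rewrite angles; split=> //.
by rewrite flow_eq !mulmxA row_one_mulmx_incidence // !mul0mx.
Qed.

Hypothesis edge_connected : graph_connected edge.

Lemma P2_feasible_P1 (q : 'cV[R]_n) :
  P2_feasible HT F d q -> P1_feasible C B d Flo Fup q (Ld *m (q - d)).
Proof.
move=> /P2_feasibleE [sum0 bounds]; rewrite /P1_feasible /= (mulmxA C^T).
split=> //; rewrite !mulmxA laplacian_MP_mulmx_sum0 //; exact: subrr.
Qed.

End Feasibility.

Theorem lemma1 (R : realType) (n m : nat) (edge : 'I_m -> 'I_n * 'I_n)
  (b : 'I_m -> R) (Ld : 'M[R]_n) (Flo Fup : 'cV[R]_m) (d : 'cV[R]_n)
  (J : 'I_n -> R -> R)
  (Hedge : simple_oriented edge) (Hconn : graph_connected edge)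
  (Hb : forall e, 0 < b e)
  (HLd : is_MP_inverse
           (incidence R edge *m diag_mx (\row_e b e) *m (incidence R edge)^T) Ld)
  (HJc : forall j, strictly_convex (J j))
  (HJd : forall j, twice_differentiable (J j))
  (q : 'cV[R]_n) (thetat : 'cV[R]_m) :
  let C := incidence R edge in
  let B := diag_mx (\row_e b e) in
  let HT := col_mx (B *m C^T *m Ld) (- (B *m C^T *m Ld)) in
  let F := col_mx Fup (- Flo) in
  (exists theta : 'cV[R]_n, C^T *m theta = thetat /\ P1_optimal J C B d Flo Fup q theta)
  <-> (thetat = C^T *m Ld *m (q - d) /\ P2_optimal J HT F d q).
Proof.
move=> C B HT F.
split=> [[theta [<- [feas1 opt1]]] | [-> [feas2 opt2]]].
  have [feas2 angles] := P1_feasible_P2 Hedge Hb HLd feas1.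
  by split=> //; split=> // q' /(P2_feasible_P1 Hedge Hb HLd Hconn); apply: opt1.
exists (Ld *m (q - d)); rewrite mulmxA; split=> //; split.
  exact: P2_feasible_P1.
by move=> q' theta' /(P1_feasible_P2 Hedge Hb HLd) [/opt2].
Qed.
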